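(* For a facility location problem with $n$ agents, the Leftmost mechanism $n$-approximates the complemented Gini index of utilities.
   Context: One facility is located on $[0,1]$; $n$ agents have locations $x_1\le\dots\le x_n$ in $[0,1]$. For a facility at $y$, agent $i$ has distance $d_i=|x_i-y|$ and utility $u_i=1-d_i$. The Gini index of utilities is $G_u=\frac{\sum_i\sum_j|u_i-u_j|}{2n\sum_i u_i}$ and the complemented Gini index is $1-G_u$. The Leftmost mechanism locates the facility at $x_1$. For a mechanism $M$ and a maximization objective $O$, the approximation ratio (over profiles with $n$ agents) is the supremum over all profiles $x\in[0,1]^n$ of $\mathrm{OPT}(x)/O(M(x))$, where $\mathrm{OPT}(x)=\max_{y\in[0,1]}O(y)$; $M$ ''$\alpha$-approximates'' $O$ if this approximation ratio equals $\alpha$. *)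

From HB Require Import structures.
From mathcomp Require Import all_boot all_order all_algebra.
From mathcomp Require Import all_classical all_reals.
Set Implicit Arguments. Unset Strict Implicit. Unset Printing Implicit Defensive.
Import Order.TTheory GRing.Theory Num.Theory.
Local Open Scope ring_scope.
Local Open Scope classical_set_scope.

Section FacilityGini.
Variables (R : realType) (n : nat).

Definition profile := 'I_n -> R.

Definition is_profile (x : profile) : Prop := forall i, 0 <= x i <= 1.

Definition util (x : profile) (y : R) (i : 'I_n) : R := 1 - `|x i - y|.

Definition gini_u (x : profile) (y : R) : R :=
  (\sum_(i < n) \sum_(j < n) `|util x y i - util x y j|)
  / (2 * n%:R * \sum_(i < n) util x y i).

Definition cgini (x : profile) (y : R) : R := 1 - gini_u x y.

Definition OPT (x : profile) : R := sup [set cgini x y | y in `[0, 1]%classic].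

Definition leftmost (x : profile) : R := \big[Order.min/1]_(i < n) x i.

Definition leftmost_cgini_ratio : R :=
  sup [set OPT x / cgini x (leftmost x) | x in is_profile].

End FacilityGini.

From mathcomp Require Import all_boot all_order all_algebra.
From mathcomp Require Import all_classical all_reals.
From mathcomp Require Import ring lra.
Set Implicit Arguments. Unset Strict Implicit. Unset Printing Implicit Defensive.
Import Order.TTheory GRing.Theory Num.Theory.
Local Open Scope ring_scope.

(* At the Leftmost location some agent has utility 1, so the utilities are
   nonnegative with positive sum.  Writing |u_i - u_j| = u_i + u_j - 2 min(u_i, u_j)
   and keeping only the diagonal of the sum of minima bounds the Gini index of such
   a vector by (n-1)/n: Leftmost achieves at least 1/n, while no location achieves
   more than 1.  Both bounds are attained when one agent sits at 0 and all others at
   1: Leftmost serves only the agent at 0, whose 0/1 utility vector has Gini index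
   exactly (n-1)/n, while the facility at 1/2 equalizes all utilities. *)

Section PairwiseDistances.
Variables (R : realFieldType) (n : nat).
Implicit Types u : 'I_n -> R.

Lemma sum_pairwise_dist u :
  \sum_i \sum_j `|u i - u j| =
  2 * (n%:R * \sum_i u i - \sum_i \sum_j Num.min (u i) (u j)).
Proof.
have distE i j : `|u i - u j| = u i + u j - 2 * Num.min (u i) (u j).
  by rewrite minr_absE; field.
under eq_bigr do rewrite (eq_bigr _ (fun j _ => distE _ j)) sumrB big_split /=.
rewrite sumrB big_split /=.
under [in X in _ - X]eq_bigr do rewrite -mulr_sumr.
rewrite -mulr_sumr exchange_big /= -big_split /=.
rewrite sumr_const card_ord -mulr_natl; lra.
Qed.

Lemma sum_pairwise_dist_le u : (forall i, 0 <= u i) ->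
  \sum_i \sum_j `|u i - u j| <= 2 * (n%:R - 1) * \sum_i u i.
Proof.
move=> u_ge0; rewrite sum_pairwise_dist.
have diag : \sum_i u i <= \sum_i \sum_j Num.min (u i) (u j).
  apply: ler_sum => i _; rewrite (bigD1 i) //= minxx lerDl.
  by apply: sumr_ge0 => j _; rewrite le_min !u_ge0.
lra.
Qed.

Lemma sum_pairwise_dist_bool (b : 'I_n -> bool) :
  \sum_i \sum_j `|(b i)%:R - (b j)%:R| =
  2 * (\sum_i (b i)%:R) * (n%:R - \sum_i (b i)%:R) :> R.
Proof.
have minE i j : Num.min (b i)%:R (b j)%:R = (b i)%:R * (b j)%:R :> R.
  by case: (b i) (b j) => [] [];
    rewrite /= ?mulr1 ?mulr0 ?minxx ?(min_r ler01) ?(min_l ler01).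
rewrite sum_pairwise_dist.
under [\sum_i \sum_j _]eq_bigr do under eq_bigr do rewrite minE.
rewrite -big_distrlr /=; ring.
Qed.
End PairwiseDistances.

Lemma sup_eq_max (R : realType) (E : set R) (a : R) :
  E a -> ubound E a -> sup E = a.
Proof.
move=> Ea ubEa; have supE : has_sup E by split; exists a.
apply/le_anti/andP; split; first by apply: ge_sup => //; exists a.
exact: sup_upper_bound supE _ Ea.
Qed.

Section LeftmostGini.
Variables (R : realType) (n : nat).
Implicit Types (x : profile R n) (y : R).

Lemma util_ge0 x y i : is_profile x -> 0 <= y <= 1 -> 0 <= util x y i.
Proof.
move=> hx /andP[y_ge0 y_le1]; rewrite /util subr_ge0 ler_norml.
by case/andP: (hx i) => xi_ge0 xi_le1; apply/andP; split; lra.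
Qed.

Lemma gini_u_ge0 x y : is_profile x -> 0 <= y <= 1 -> 0 <= gini_u x y.
Proof.
move=> hx hy; apply: divr_ge0.
  by apply: sumr_ge0 => i _; apply: sumr_ge0.
by rewrite !mulr_ge0 // sumr_ge0 // => i _; apply: util_ge0.
Qed.

Lemma cgini_le1 x y : is_profile x -> 0 <= y <= 1 -> cgini x y <= 1.
Proof. by move=> hx hy; rewrite /cgini gerBl gini_u_ge0. Qed.

Lemma cgini_ge_invn x y : is_profile x -> 0 <= y <= 1 ->
  0 < \sum_i util x y i -> n%:R^-1 <= cgini x y.
Proof.
move=> hx hy S_gt0; rewrite /cgini /gini_u.
set S := \sum_i util x y i in S_gt0 *; set A := \sum_i \sum_j _.
have A_le : A <= 2 * (n%:R - 1) * S.
  by apply: sum_pairwise_dist_le => i; apply: util_ge0.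
have A_ge0 : 0 <= A by apply: sumr_ge0 => i _; apply: sumr_ge0.
have n_gt0 : 0 < n%:R :> R by nra.
have : A / (2 * n%:R * S) <= 1 - n%:R^-1.
  rewrite ler_pdivrMr ?mulr_gt0 //.
  suff -> : (1 - n%:R^-1) * (2 * n%:R * S) = 2 * (n%:R - 1) * S by [].
  by field; rewrite gt_eqF.
lra.
Qed.

Lemma cgini_eq1 x y : (forall i j, util x y i = util x y j) -> cgini x y = 1.
Proof.
move=> util_const; rewrite /cgini /gini_u big1 ?mul0r ?subr0 // => i _.
by rewrite big1 // => j _; rewrite (util_const i j) subrr normr0.
Qed.

Lemma OPT_le1 x : is_profile x -> OPT x <= 1.
Proof.
move=> hx; apply: ge_sup.
  by exists (cgini x 0), 0; rewrite //= in_itv /= lexx ler01.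
by move=> _ [y hy <-]; apply: cgini_le1; rewrite // -in_itv.
Qed.

Lemma cgini_le_OPT x y : is_profile x -> 0 <= y <= 1 -> cgini x y <= OPT x.
Proof.
move=> hx hy; apply: sup_upper_bound; last by exists y; rewrite //= in_itv.
split; first by exists (cgini x y), y; rewrite //= in_itv.
by exists 1 => _ [z hz <-]; apply: cgini_le1; rewrite // -in_itv.
Qed.

Lemma leftmost_in01 x : is_profile x -> 0 <= leftmost x <= 1.
Proof.
move=> hx; rewrite /leftmost bigmin_le_id andbT.
by apply: le_bigmin => // i _; case/andP: (hx i).
Qed.

Lemma leftmost_mem x : (0 < n)%N -> is_profile x -> exists i, leftmost x = x i.
Proof.
move=> n_gt0 hx; rewrite /leftmost.
have x_le1 i : true -> x i <= 1 by case/andP: (hx i).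
have [i _ ->] := eq_bigmin (Ordinal n_gt0) predT x isT x_le1.
by exists i.
Qed.

Lemma leftmost_ratio_le x : (0 < n)%N -> is_profile x ->
  OPT x / cgini x (leftmost x) <= n%:R.
Proof.
move=> n_gt0 hx; have leftmost01 := leftmost_in01 hx.
have [i0 xi0] := leftmost_mem n_gt0 hx.
have c_ge : n%:R^-1 <= cgini x (leftmost x).
  apply: cgini_ge_invn => //.
  rewrite (bigD1 i0) //= {1}/util xi0 subrr normr0 subr0.
  by rewrite ltr_pwDl // sumr_ge0 // => i _; apply: util_ge0.
have n_gt0R : 0 < n%:R :> R by rewrite ltr0n.
have c_gt0 : 0 < cgini x (leftmost x) by apply: lt_le_trans c_ge; rewrite invr_gt0.
rewrite ler_pdivrMr // (le_trans (OPT_le1 hx)) //.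
by rewrite -ler_pdivrMl // mulr1.
Qed.

Definition single_left (k : 'I_n) : profile R n := fun i => (i != k)%:R.

Variable k : 'I_n.

Lemma single_left_is_profile : is_profile (single_left k).
Proof.
by move=> i; rewrite /single_left; case: (i != k); rewrite /= ?lexx ?ler01.
Qed.

Lemma leftmost_single_left : leftmost (single_left k) = 0.
Proof.
apply/le_anti/andP; split; last by case/andP: (leftmost_in01 single_left_is_profile).
by have := bigmin_le 1 k (single_left k); rewrite /single_left eqxx.
Qed.

Lemma util_single_left0 i : util (single_left k) 0 i = (i == k)%:R.
Proof.
rewrite /util /single_left subr0.
by case: (i == k); rewrite /= ?normr0 ?normr1 ?subr0 ?subrr.
Qed.

Lemma cgini_single_left0 : cgini (single_left k) 0 = n%:R^-1.
Proof.
rewrite /cgini /gini_u.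
under eq_bigr do under eq_bigr do rewrite !util_single_left0.
under [in X in _ / (_ * X)]eq_bigr do rewrite util_single_left0.
rewrite sum_pairwise_dist_bool.
have -> : \sum_i (i == k)%:R = 1 :> R.
  by rewrite (bigD1 k) //= eqxx big1 ?addr0 // => i /negbTE ->.
have n_neq0 : n%:R != 0 :> R.
  by rewrite pnatr_eq0 -lt0n (leq_ltn_trans _ (ltn_ord k)).
by field.
Qed.

Lemma OPT_single_left : OPT (single_left k) = 1.
Proof.
apply/le_anti/andP; split; first exact: OPT_le1 single_left_is_profile.
have half01 : 0 <= (2^-1 : R) <= 1 by apply/andP; split; lra.
rewrite -[X in X <= _](@cgini_eq1 (single_left k) 2^-1); last first.
  suff util_half i : util (single_left k) 2^-1 i = 2^-1.
    by move=> i j; rewrite !util_half.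
  rewrite /util /single_left.
  by case: (i != k); rewrite /= ?sub0r ?normrN ger0_norm; lra.
exact: cgini_le_OPT single_left_is_profile half01.
Qed.

Lemma leftmost_ratio_single_left :
  OPT (single_left k) / cgini (single_left k) (leftmost (single_left k)) = n%:R.
Proof.
by rewrite leftmost_single_left cgini_single_left0 OPT_single_left div1r invrK.
Qed.

End LeftmostGini.

Theorem theorem2 (R : realType) (n : nat) (hn : (0 < n)%N) :
  leftmost_cgini_ratio R n = n%:R.
Proof.
apply: sup_eq_max.
  exists (single_left R (Ordinal hn)); first exact: single_left_is_profile.
  exact: leftmost_ratio_single_left.
by move=> _ [x hx <-]; apply: leftmost_ratio_le.
Qed.
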